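(* Let $\alpha=[0;a_1,a_2,\ldots]\in\mathbf{Bad}$ be such that its continued fraction expansion begins in infinitely many palindromes, i.e. there are infinitely many $n$ such that the word $a_1a_2\ldots a_n$ is a palindrome. Let $\beta$ be any real number equal to $\alpha$ up to a rational homography. Then $\inf_{q\ge1}q\cdot\Vert q\alpha\Vert\cdot\Vert q\beta\Vert=0$ and, moreover, $$\liminf_{q\to+\infty}q^2\cdot\Vert q\alpha\Vert\cdot\Vert q\beta\Vert<+\infty.$$
   Context: For a real number $y$, $\Vert y\Vert$ denotes the distance from $y$ to the nearest integer. $\mathbf{Bad}=\{\alpha\in\mathbb{R} : \inf_{q\ge1} q\Vert q\alpha\Vert>0\}$ (equivalently, real numbers with bounded partial quotients). A finite word $w_1\ldots w_n$ is a palindrome if $w_i=w_{n+1-i}$ for all $i$. A real number $\beta$ is equal to $\alpha$ up to a rational homography if $\beta=(a\alpha+b)/(c\alpha+d)$ for some integers $a,b,c,d$ with $ad-bc\neq0$. *)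

From Stdlib Require Import Reals ZArith.
From Coquelicot Require Import Coquelicot.
Open Scope R_scope.

Definition dist_int (y : R) : R :=
  Rmin (y - IZR (Int_part y)) (IZR (Int_part y) + 1 - y).

Definition inf_q_ge1 (f : nat -> R) : Rbar :=
  Rbar_glb (fun x => exists q : nat, (1 <= q)%nat /\ x = Finite (f q)).

Definition Bad (alpha : R) : Prop :=
  Rbar_lt (Finite 0) (inf_q_ge1 (fun q => INR q * dist_int (INR q * alpha))).

(* Gauss map x |-> {1/x} and partial quotients:
   for alpha = [0; a_1, a_2, ...] (irrational, in (0,1)),
   cf_pq alpha n = a_n (n >= 1), a_n = floor (1 / T^(n-1) alpha). *)
Definition gauss (x : R) : R := / x - IZR (Int_part (/ x)).

Definition cf_pq (alpha : R) (n : nat) : Z :=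
  Int_part (/ (Nat.iter (n - 1) gauss alpha)).

Definition cf_prefix_palindrome (alpha : R) (n : nat) : Prop :=
  forall i : nat, (1 <= i <= n)%nat -> cf_pq alpha i = cf_pq alpha (n + 1 - i).

Definition rational_homography (alpha beta : R) : Prop :=
  exists a b c d : Z, (a * d - b * c <> 0)%Z /\
    beta = (IZR a * alpha + IZR b) / (IZR c * alpha + IZR d).

From Stdlib Require Import Reals ZArith Lra Lia List.
From Coquelicot Require Import Coquelicot.
Open Scope R_scope.

(* Let M(a) = [[a, 1], [1, 0]]. The product M(a_1) ... M(a_n) is [[q_n, q_(n-1)], [p_n, p_(n-1)]],
   and alpha = (p_n + p_(n-1) x) / (q_n + q_(n-1) x) with x = T^n alpha in (0, 1), T the Gauss map, so that
   |q_n alpha - p_n| and |q_(n-1) alpha - p_(n-1)| are at most 1/q_n. Transposing the product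
   reverses the word, hence for a palindromic prefix the matrix is symmetric: p_n = q_(n-1).
   Then p_n is itself a good multiplier for alpha, with ||p_n alpha|| <= 1/q_n. For
   beta = (a alpha + b)/(c alpha + d) the integer Q = c p_n + d q_n is of order q_n, and both
   ||Q alpha|| and ||Q beta|| are O(1/q_n), so Q^2 ||Q alpha|| ||Q beta|| stays bounded along the
   infinitely many palindromic n; dividing by Q gives the infimum 0. *)

Record mat := Mat { m11 : Z; m12 : Z; m21 : Z; m22 : Z }.

Definition mmul (X Y : mat) : mat :=
  Mat (m11 X * m11 Y + m12 X * m21 Y)%Z (m11 X * m12 Y + m12 X * m22 Y)%Z
      (m21 X * m11 Y + m22 X * m21 Y)%Z (m21 X * m12 Y + m22 X * m22 Y)%Z.
Definition mid : mat := Mat 1 0 0 1.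
Definition mtr (X : mat) : mat := Mat (m11 X) (m21 X) (m12 X) (m22 X).
Definition mdet (X : mat) : Z := (m11 X * m22 X - m12 X * m21 X)%Z.

Definition cf_mat (z : Z) : mat := Mat z 1 1 0.
Definition cf_prod (l : list Z) : mat := fold_right (fun z P => mmul (cf_mat z) P) mid l.

Ltac mat_ring := intros; repeat match goal with X : mat |- _ => destruct X end;
  unfold mmul, mtr, mdet, mid; cbn [m11 m12 m21 m22]; first [ring | f_equal; ring].

Lemma mmulA X Y W : mmul X (mmul Y W) = mmul (mmul X Y) W. Proof. mat_ring. Qed.
Lemma mmul1m X : mmul mid X = X. Proof. mat_ring. Qed.
Lemma mmulm1 X : mmul X mid = X. Proof. mat_ring. Qed.
Lemma mtr_mmul X Y : mtr (mmul X Y) = mmul (mtr Y) (mtr X). Proof. mat_ring. Qed.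
Lemma mdet_mmul X Y : mdet (mmul X Y) = (mdet X * mdet Y)%Z. Proof. mat_ring. Qed.

Lemma cf_prod_app l1 l2 : cf_prod (l1 ++ l2) = mmul (cf_prod l1) (cf_prod l2).
Proof.
  induction l1 as [|z l IH]; simpl; [now rewrite mmul1m|].
  now rewrite IH, mmulA.
Qed.

Lemma cf_prod_rcons l z : cf_prod (l ++ z :: nil) = mmul (cf_prod l) (cf_mat z).
Proof. now rewrite cf_prod_app; simpl; rewrite mmulm1. Qed.

Lemma mtr_cf_prod l : mtr (cf_prod l) = cf_prod (rev l).
Proof.
  induction l as [|z l IH]; [reflexivity|].
  simpl. now rewrite mtr_mmul, IH, cf_prod_rcons.
Qed.

Lemma cf_prod_palindrome_sym l : rev l = l -> m12 (cf_prod l) = m21 (cf_prod l).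
Proof.
  intros Hl. assert (T := mtr_cf_prod l). rewrite Hl in T.
  now destruct (cf_prod l); injection T.
Qed.

Lemma mdet_cf_prod l : Z.abs (mdet (cf_prod l)) = 1%Z.
Proof.
  induction l as [|z l IH]; [reflexivity|].
  simpl. rewrite mdet_mmul, Z.abs_mul, IH.
  replace (mdet (cf_mat z)) with (-1)%Z by (unfold mdet; simpl; ring).
  reflexivity.
Qed.

Lemma cf_prod_nonneg l : List.Forall (fun z => (0 <= z)%Z) l ->
  (0 <= m11 (cf_prod l) /\ 0 <= m12 (cf_prod l) /\
   0 <= m21 (cf_prod l) /\ 0 <= m22 (cf_prod l))%Z.
Proof.
  induction 1 as [|z l Hz _ IH]; [simpl; lia|].
  cbn [cf_prod fold_right]. fold (cf_prod l) in *.
  destruct (cf_prod l); unfold mmul, cf_mat; cbn [m11 m12 m21 m22] in *. nia.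
Qed.

Lemma cf_prod_m11_ge_length l : List.Forall (fun z => (1 <= z)%Z) l ->
  (1 <= m11 (cf_prod l) /\ Z.of_nat (length l) <= m11 (cf_prod l))%Z.
Proof.
  intros Hl.
  assert (Hnn : List.Forall (fun z => (0 <= z)%Z) l) by (revert Hl; apply List.Forall_impl; lia).
  (* [cons z] maps the first column [(A, C)] to [(z A + C, A)], so the induction carries a bound on [A + C]. *)
  enough (1 <= m11 (cf_prod l) /\ Z.of_nat (length l) <= m11 (cf_prod l) /\
          Z.of_nat (length l) < m11 (cf_prod l) + m21 (cf_prod l))%Z by tauto.
  induction Hl as [|z l Hz Hl IH]; [simpl; lia|].
  inversion_clear Hnn as [|? ? _ Hnn'].
  destruct (cf_prod_nonneg l Hnn') as (_ & _ & HC & _).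
  specialize (IH Hnn'). cbn [cf_prod fold_right length]. fold (cf_prod l) in *.
  rewrite Nat2Z.inj_succ.
  destruct (cf_prod l); unfold mmul, cf_mat; cbn [m11 m12 m21 m22] in *. nia.
Qed.

Lemma dist_int_ge0 y : 0 <= dist_int y.
Proof. unfold dist_int. destruct (base_Int_part y). apply Rmin_glb; lra. Qed.

Lemma dist_int_le y (m : Z) : dist_int y <= Rabs (y - IZR m).
Proof.
  unfold dist_int. destruct (base_Int_part y) as [H1 H2].
  destruct (Z_le_gt_dec m (Int_part y)) as [Hm|Hm].
  - apply IZR_le in Hm. eapply Rle_trans; [apply Rmin_l|].
    rewrite Rabs_right; lra.
  - assert (Hm' : (Int_part y + 1 <= m)%Z) by lia.
    apply IZR_le in Hm'. rewrite plus_IZR in Hm'.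
    eapply Rle_trans; [apply Rmin_r|]. rewrite Rabs_left1; lra.
Qed.

Lemma dist_int_Zmul_le (Q m : Z) y :
  dist_int (INR (Z.abs_nat Q) * y) <= Rabs (IZR Q * y - IZR m).
Proof.
  rewrite INR_IZR_INZ, Zabs2Nat.id_abs.
  destruct (Z_le_gt_dec 0 Q).
  - rewrite Z.abs_eq by lia. apply dist_int_le.
  - rewrite Z.abs_neq, opp_IZR by lia.
    eapply Rle_trans; [apply (dist_int_le _ (- m))|].
    rewrite opp_IZR, <- Rabs_Ropp. right. f_equal. ring.
Qed.

Definition irrational (y : R) : Prop := forall p q : Z, IZR q * y = IZR p -> q = 0%Z.

Lemma inf_q_ge1_le (f : nat -> R) q : (1 <= q)%nat -> Rbar_le (inf_q_ge1 f) (f q).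
Proof.
  intros Hq. apply (proj1 (proj2_sig (Rbar_ex_glb _))). now exists q.
Qed.

Lemma Bad_irrational alpha : Bad alpha -> irrational alpha.
Proof.
  intros HB p q E. destruct (Z.eq_dec q 0) as [|Hq]; [assumption|exfalso].
  assert (Hk : (1 <= Z.abs_nat q)%nat) by lia.
  assert (D : dist_int (INR (Z.abs_nat q) * alpha) = 0).
  { apply Rle_antisym; [|apply dist_int_ge0].
    eapply Rle_trans; [apply (dist_int_Zmul_le q p)|].
    rewrite E, Rminus_diag, Rabs_R0. lra. }
  assert (Hle := inf_q_ge1_le (fun k => INR k * dist_int (INR k * alpha)) _ Hk).
  unfold Bad in HB. cbv beta in Hle. rewrite D, Rmult_0_r in Hle.
  exact (Rbar_lt_not_le _ _ HB Hle).
Qed.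

Lemma Int_part_inv_ge1 y : 0 < y < 1 -> (1 <= Int_part (/ y))%Z.
Proof.
  intros Hy. assert (Ht : 1 < / y) by (rewrite <- Rinv_1; apply Rinv_lt_contravar; lra).
  destruct (base_Int_part (/ y)). enough (0 < Int_part (/ y))%Z by lia.
  apply lt_IZR. lra.
Qed.

Lemma gauss_bounds y : 0 < y < 1 -> irrational y -> 0 < gauss y < 1.
Proof.
  intros Hy Hi. unfold gauss. destruct (base_Int_part (/ y)) as [H1 H2].
  split; [|lra].
  destruct (Rle_lt_or_eq_dec _ _ H1) as [|E]; [lra|exfalso].
  assert (Hf : IZR (Int_part (/ y)) * y = IZR 1) by (rewrite E; simpl; field; lra).
  apply Hi in Hf. pose proof (Int_part_inv_ge1 y Hy). lia.
Qed.

Lemma gauss_irrational y : y <> 0 -> irrational y -> irrational (gauss y).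
Proof.
  intros Hy Hi p q E. unfold gauss in E.
  assert (E2 : IZR (p + Int_part (/ y) * q) * y = IZR q).
  { rewrite plus_IZR, mult_IZR, <- E. field. exact Hy. }
  assert (E3 := E2). apply Hi in E3. rewrite E3, Rmult_0_l in E2.
  symmetry. now apply eq_IZR.
Qed.

Definition gauss_iter (alpha : R) (n : nat) : R := Nat.iter n gauss alpha.

Lemma gauss_iter_S alpha n : gauss_iter alpha (S n) = gauss (gauss_iter alpha n).
Proof. reflexivity. Qed.

Lemma gauss_iter_spec alpha : 0 < alpha < 1 -> irrational alpha ->
  forall n, 0 < gauss_iter alpha n < 1 /\ irrational (gauss_iter alpha n).
Proof.
  intros Ha Hi n. induction n as [|n [Hx Hxi]]; [easy|]. rewrite gauss_iter_S.
  split; [now apply gauss_bounds | apply gauss_irrational; [lra | exact Hxi]].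
Qed.

Lemma cf_pq_S alpha n : cf_pq alpha (S n) = Int_part (/ gauss_iter alpha n).
Proof. unfold cf_pq. now rewrite Nat.sub_succ, Nat.sub_0_r. Qed.

Definition convergent_mat (alpha : R) (n : nat) : mat :=
  cf_prod (map (cf_pq alpha) (seq 1 n)).

Lemma convergent_mat_S alpha n :
  convergent_mat alpha (S n) = mmul (convergent_mat alpha n) (cf_mat (cf_pq alpha (S n))).
Proof. unfold convergent_mat. rewrite seq_S, map_app. apply cf_prod_rcons. Qed.

Lemma convergent_mat_complete_quotient alpha n : 0 < alpha < 1 -> irrational alpha ->
  let P := convergent_mat alpha n in let x := gauss_iter alpha n in
  IZR (m21 P) + IZR (m22 P) * x = alpha * (IZR (m11 P) + IZR (m12 P) * x).
Proof.
  intros Ha Hi. induction n as [|n IH]; cbn zeta in *.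
  - simpl. ring.
  - destruct (gauss_iter_spec alpha Ha Hi n) as [Hx _].
    rewrite convergent_mat_S, cf_pq_S.
    rewrite gauss_iter_S. unfold gauss.
    destruct (convergent_mat alpha n) as [A B C D]. cbn [m11 m12 m21 m22 mmul cf_mat] in *.
    rewrite !plus_IZR, !mult_IZR.
    set (x := gauss_iter alpha n) in *.
    transitivity ((IZR C + IZR D * x) / x); [field; lra|].
    rewrite IH. field. lra.
Qed.

Lemma cf_pq_ge1 alpha n : 0 < alpha < 1 -> irrational alpha -> (1 <= cf_pq alpha (S n))%Z.
Proof.
  intros Ha Hi. rewrite cf_pq_S. apply Int_part_inv_ge1, gauss_iter_spec; assumption.
Qed.

(* With [s = A + B x >= A], unimodularity gives [(A alpha - C) s = +-x] and [(B alpha - D) s = -+1]. *)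
Lemma unimodular_approx (A B C D : Z) (alpha x : R) :
  0 < x < 1 -> (1 <= A)%Z -> (0 <= B)%Z -> Z.abs (A * D - B * C) = 1%Z ->
  IZR C + IZR D * x = alpha * (IZR A + IZR B * x) ->
  IZR A * Rabs (IZR A * alpha - IZR C) <= 1 /\ IZR A * Rabs (IZR B * alpha - IZR D) <= 1.
Proof.
  intros Hx HA HB Hdet E. apply IZR_le in HA, HB.
  set (s := IZR A + IZR B * x).
  assert (Hs : IZR A <= s) by (unfold s; nra).
  assert (Hdelta : Rabs (IZR (A * D - B * C)) = 1) by (now rewrite <- abs_IZR, Hdet).
  assert (E1 : (IZR A * alpha - IZR C) * s = x * IZR (A * D - B * C)).
  { rewrite minus_IZR, !mult_IZR. unfold s. rewrite Rmult_minus_distr_r, Rmult_assoc, <- E. ring. }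
  assert (E2 : (IZR B * alpha - IZR D) * s = - IZR (A * D - B * C)).
  { rewrite minus_IZR, !mult_IZR. unfold s. rewrite Rmult_minus_distr_r, Rmult_assoc, <- E. ring. }
  apply (f_equal Rabs) in E1, E2.
  rewrite Rabs_mult, Rabs_mult, (Rabs_right s), (Rabs_right x), Hdelta in E1 by lra.
  rewrite Rabs_mult, Rabs_Ropp, (Rabs_right s), Hdelta in E2 by lra.
  pose proof (Rabs_pos (IZR A * alpha - IZR C)). pose proof (Rabs_pos (IZR B * alpha - IZR D)).
  split; nra.
Qed.

Lemma rev_map_seq_palindrome (a : nat -> Z) n :
  (forall i, (1 <= i <= n)%nat -> a i = a (n + 1 - i)%nat) ->
  rev (map a (seq 1 n)) = map a (seq 1 n).
Proof.
  intros Hpal. apply nth_ext with (d := 0%Z) (d' := 0%Z).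
  - now rewrite length_rev.
  - intros i Hi. rewrite length_rev, length_map, length_seq in Hi.
    rewrite rev_nth, length_map, length_seq by (rewrite length_map, length_seq; lia).
    rewrite !(nth_indep (map a (seq 1 n)) 0%Z (a 0%nat)) by (rewrite length_map, length_seq; lia).
    rewrite !map_nth, !seq_nth by lia.
    rewrite Hpal by lia. f_equal. lia.
Qed.

Lemma palindromic_convergent_approx alpha n : 0 < alpha < 1 -> irrational alpha ->
  cf_prefix_palindrome alpha n ->
  exists A C D : Z, (1 <= A)%Z /\ (Z.of_nat n <= A)%Z /\
    IZR A * Rabs (IZR A * alpha - IZR C) <= 1 /\ IZR A * Rabs (IZR C * alpha - IZR D) <= 1.
Proof.
  intros Ha Hi Hpal.
  assert (Hpq : List.Forall (fun z => (1 <= z)%Z) (map (cf_pq alpha) (seq 1 n))).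
  { apply Forall_map, Forall_forall. intros i Hin. apply in_seq in Hin.
    replace i with (S (i - 1)) by lia. now apply cf_pq_ge1. }
  assert (Hsym := cf_prod_palindrome_sym _ (rev_map_seq_palindrome _ n Hpal)).
  assert (Hdet := mdet_cf_prod (map (cf_pq alpha) (seq 1 n))).
  destruct (cf_prod_m11_ge_length _ Hpq) as [HA1 HAn].
  assert (Hnn : List.Forall (fun z => (0 <= z)%Z) (map (cf_pq alpha) (seq 1 n)))
    by (revert Hpq; apply List.Forall_impl; lia).
  destruct (cf_prod_nonneg _ Hnn) as (_ & HB & _ & _).
  assert (E := convergent_mat_complete_quotient alpha n Ha Hi).
  destruct (gauss_iter_spec alpha Ha Hi n) as [Hx _].
  rewrite length_map, length_seq in HAn.
  unfold convergent_mat in E. cbn zeta in E.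
  destruct (cf_prod (map (cf_pq alpha) (seq 1 n))) as [A B C D].
  cbn [m11 m12 m21 m22 mdet] in *. subst B.
  exists A, C, D. repeat split; try assumption.
  all: apply (unimodular_approx A C C D alpha (gauss_iter alpha n)); assumption.
Qed.

Lemma sq_mul_le_of_scaled (q A da db k0 ka kb : R) :
  0 <= A -> 0 <= q <= k0 * A -> 0 <= da -> 0 <= db -> A * da <= ka -> A * db <= kb ->
  q ^ 2 * da * db <= k0 ^ 2 * ka * kb.
Proof.
  intros HA Hq Hda Hdb Ha Hb.
  assert (Hq2 : q ^ 2 <= (k0 * A) ^ 2) by (apply pow_incr; lra).
  apply Rle_trans with ((k0 * A) ^ 2 * da * db); [repeat apply Rmult_le_compat_r; auto|].
  replace ((k0 * A) ^ 2 * da * db) with (k0 ^ 2 * ((A * da) * (A * db))) by ring.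
  replace (k0 ^ 2 * ka * kb) with (k0 ^ 2 * (ka * kb)) by ring.
  apply Rmult_le_compat_l; [apply pow2_ge_0|].
  apply Rmult_le_compat; try apply Rmult_le_pos; assumption.
Qed.

Lemma homography_denominator_neq0 alpha (a b c d : Z) :
  irrational alpha -> (a * d - b * c <> 0)%Z -> IZR c * alpha + IZR d <> 0.
Proof.
  intros Hi Hdet E.
  assert (Hc : c = 0%Z) by (apply (Hi (- d)%Z); rewrite opp_IZR; lra).
  subst c. assert (d = 0%Z) by (apply eq_IZR; lra). subst d. lia.
Qed.

(* [Q = c C + d A] is chosen so that [Q beta - (a C + b A) = (A alpha - C) (a - c beta)]:
   [Q beta] inherits the error of [A alpha], while [Q alpha] combines those of [A alpha], [C alpha]. *)
Lemma homography_approx (alpha beta : R) (a b c d A C D : Z) :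
  beta * (IZR c * alpha + IZR d) = IZR a * alpha + IZR b -> (1 <= A)%Z ->
  IZR A * Rabs (IZR A * alpha - IZR C) <= 1 -> IZR A * Rabs (IZR C * alpha - IZR D) <= 1 ->
  let q := Z.abs_nat (c * C + d * A) in
  IZR A * Rabs (IZR c * alpha + IZR d) - Rabs (IZR c) <= INR q /\
  INR q ^ 2 * dist_int (INR q * alpha) * dist_int (INR q * beta) <=
    (Rabs (IZR c * alpha + IZR d) + Rabs (IZR c)) ^ 2 * (Rabs (IZR c) + Rabs (IZR d))
    * Rabs (IZR a - IZR c * beta).
Proof.
  intros Hbeta HA He1 He2 q. apply IZR_le in HA.
  set (e1 := IZR A * alpha - IZR C) in *. set (e2 := IZR C * alpha - IZR D) in *.
  set (den := IZR c * alpha + IZR d) in *.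
  set (Q := (c * C + d * A)%Z) in q.
  assert (EQ : IZR Q = IZR A * den - IZR c * e1)
    by (unfold Q, e1, den; rewrite plus_IZR, !mult_IZR; ring).
  assert (Ealpha : IZR Q * alpha - IZR (c * D + d * C) = IZR c * e2 + IZR d * e1)
    by (unfold Q, e1, e2; rewrite !plus_IZR, !mult_IZR; ring).
  assert (Ebeta : IZR Q * beta - IZR (a * C + b * A) = e1 * (IZR a - IZR c * beta)).
  { rewrite EQ, plus_IZR, !mult_IZR. unfold e1.
    replace ((IZR A * den - IZR c * (IZR A * alpha - IZR C)) * beta)
      with (IZR A * (beta * den) - IZR c * (IZR A * alpha - IZR C) * beta) by ring.
    rewrite Hbeta. ring. }
  assert (Hq : INR q = Rabs (IZR Q))
    by (unfold q; now rewrite INR_IZR_INZ, Zabs2Nat.id_abs, abs_IZR).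
  assert (Hda := dist_int_Zmul_le Q (c * D + d * C) alpha).
  assert (Hdb := dist_int_Zmul_le Q (a * C + b * A) beta).
  fold q in Hda, Hdb. rewrite Ealpha in Hda. rewrite Ebeta, Rabs_mult in Hdb.
  assert (Hc2 := Rabs_triang (IZR c * e2) (IZR d * e1)). rewrite !Rabs_mult in Hc2.
  assert (HQ1 := Rabs_triang_inv (IZR A * den) (IZR c * e1)).
  assert (HQ2 := Rabs_triang (IZR A * den) (- (IZR c * e1))).
  rewrite Rabs_Ropp in HQ2. rewrite !Rabs_mult, (Rabs_right (IZR A)) in HQ1, HQ2 by lra.
  rewrite <- EQ, <- Hq in HQ1. unfold Rminus in EQ. rewrite <- EQ, <- Hq in HQ2.
  pose proof (Rabs_pos e1). pose proof (Rabs_pos e2). pose proof (Rabs_pos den).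
  pose proof (Rabs_pos (IZR c)). pose proof (Rabs_pos (IZR d)).
  pose proof (Rabs_pos (IZR a - IZR c * beta)).
  split; [nra|].
  apply sq_mul_le_of_scaled with (A := IZR A); try apply dist_int_ge0; try nra.
  split; [apply pos_INR | nra].
Qed.

Lemma palindromic_homography_bounded_often alpha beta :
  0 < alpha < 1 -> irrational alpha ->
  (forall N : nat, exists n : nat, (N < n)%nat /\ cf_prefix_palindrome alpha n) ->
  rational_homography alpha beta ->
  exists K, forall N : nat, exists q : nat, (N <= q)%nat /\
    INR q ^ 2 * dist_int (INR q * alpha) * dist_int (INR q * beta) <= K.
Proof.
  intros Ha Hi Hpal [a [b [c [d [Hdet Hb]]]]].
  assert (Hden := homography_denominator_neq0 alpha a b c d Hi Hdet).
  set (den := IZR c * alpha + IZR d) in *.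
  assert (Hbeta : beta * den = IZR a * alpha + IZR b) by (rewrite Hb; field; exact Hden).
  assert (Hden_pos : 0 < Rabs den) by (apply Rabs_pos_lt, Hden).
  eexists. intros N.
  destruct (INR_unbounded ((INR N + Rabs (IZR c)) / Rabs den)) as [n0 Hn0].
  destruct (Hpal n0) as [n [Hn Hpaln]].
  destruct (palindromic_convergent_approx alpha n Ha Hi Hpaln) as (A & C & D & HA & HAn & He1 & He2).
  destruct (homography_approx alpha beta a b c d A C D Hbeta HA He1 He2) as [Hq Hbound].
  fold den in Hq, Hbound.
  exists (Z.abs_nat (c * C + d * A)). split; [|exact Hbound].
  apply INR_le. eapply Rle_trans; [|exact Hq].
  assert (HnA : INR n0 <= IZR A) by (rewrite INR_IZR_INZ; apply IZR_le; lia).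
  apply Rmult_lt_compat_r with (r := Rabs den) in Hn0; [|exact Hden_pos].
  unfold Rdiv in Hn0. rewrite Rmult_assoc, Rinv_l, Rmult_1_r in Hn0 by lra.
  nra.
Qed.

Lemma frequently_small_of_bounded (f : nat -> R) K :
  (forall N : nat, exists q : nat, (N <= q)%nat /\ INR q * f q <= K) ->
  forall eps, 0 < eps -> exists q : nat, (1 <= q)%nat /\ f q <= eps.
Proof.
  intros HK eps Heps.
  destruct (INR_unbounded (K / eps)) as [N HN].
  destruct (HK (S N)) as [q [Hq Hfq]].
  exists q. split; [lia|].
  assert (HNq : INR N + 1 <= INR q) by (rewrite <- S_INR; now apply le_INR).
  apply Rmult_lt_compat_r with (r := eps) in HN; [|exact Heps].
  unfold Rdiv in HN. rewrite Rmult_assoc, Rinv_l, Rmult_1_r in HN by lra.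
  pose proof (pos_INR N). nra.
Qed.

Lemma inf_q_ge1_eq0 (f : nat -> R) :
  (forall q, 0 <= f q) ->
  (forall eps, 0 < eps -> exists q : nat, (1 <= q)%nat /\ f q <= eps) ->
  inf_q_ge1 f = Finite 0.
Proof.
  intros Hpos Hsmall. apply Rbar_is_glb_unique. split.
  - intros x [q [_ ->]]. apply Hpos.
  - intros [l | |] Hl; simpl; auto.
    + apply Rnot_lt_le. intros Hlpos.
      destruct (Hsmall (l / 2)) as [q [Hq Hfq]]; [lra|].
      specialize (Hl (Finite (f q)) (ex_intro _ q (conj Hq eq_refl))). simpl in Hl. lra.
    + destruct (Hsmall 1 Rlt_0_1) as [q [Hq _]].
      exact (Hl _ (ex_intro _ q (conj Hq eq_refl))).
Qed.

Lemma LimInf_seq_lt_p_infty (u : nat -> R) K :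
  (forall N : nat, exists n : nat, (N <= n)%nat /\ u n <= K) ->
  Rbar_lt (LimInf_seq u) p_infty.
Proof.
  intros HK. destruct (ex_LimInf_seq u) as [l Hl].
  rewrite (is_LimInf_seq_unique _ _ Hl).
  destruct l as [l | |]; simpl; auto.
  destruct (Hl K) as [N HN]. destruct (HK N) as [n [Hn Hu]].
  specialize (HN n Hn). lra.
Qed.

Theorem theorem6 (alpha beta : R) :
  0 < alpha < 1 ->
  Bad alpha ->
  (forall N : nat, exists n : nat, (N < n)%nat /\ cf_prefix_palindrome alpha n) ->
  rational_homography alpha beta ->
  inf_q_ge1 (fun q => INR q * dist_int (INR q * alpha) * dist_int (INR q * beta))
    = Finite 0 /\
  Rbar_lt (LimInf_seq (fun q => INR q ^ 2 * dist_int (INR q * alpha)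
                                           * dist_int (INR q * beta)))
          p_infty.
Proof.
  intros Ha HB Hpal Hh.
  destruct (palindromic_homography_bounded_often alpha beta Ha (Bad_irrational alpha HB) Hpal Hh)
    as [K HK].
  split.
  - apply inf_q_ge1_eq0.
    + intros q. pose proof (pos_INR q). pose proof (dist_int_ge0 (INR q * alpha)).
      pose proof (dist_int_ge0 (INR q * beta)). apply Rmult_le_pos; [apply Rmult_le_pos|]; lra.
    + apply frequently_small_of_bounded with K. intros N.
      destruct (HK N) as [q [Hq Hu]]. exists q. split; [exact Hq|]. lra.
  - now apply LimInf_seq_lt_p_infty with K.
Qed.
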